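(* Assume $\delta\in(0,1]$. Consider a critical sequence of symmetric action profiles $(p,q)$ with $p>0$, and let $\omega(n)\to\infty$. Then for every firm $i$, $$\mathbb P\big[|I_i(\mathbf p,\mathbf q)|>\omega(n)\big]\to0\quad\text{as }n\to\infty.$$
   Context: Model (for each number of firms $n\ge 2$). There are $n$ firms $1,\dots,n$; firm $i$ can discover a single idea, also labelled $i$. A parameter $\delta\in[0,1]$ is fixed. All firms use the action $(p,q)\in[0,1)\times[0,1]$ (depending on $n$). Idea $i$ is discovered independently with probability $p$; $I$ is the random set of discovered ideas. The interaction rate is $\iota(q,q)=q^2$. For each ordered pair $i\neq j$, independently, $i$ learns directly from $j$ with probability $\iota(q,q)$, and conditional on this, independently with probability $\delta$, $i$ also learns indirectly through $j$. The indirect-learning network has an edge $j\to i$ whenever $i$ learns indirectly through $j$. $I_i(\mathbf p,\mathbf q)=\{j\in I\setminus\{i\}:$ some firm $m$, with $m=i$ or with a directed path from $m$ to $i$ in the indirect-learning network, learns directly from $j\}$. The sequence (indexed by $n\to\infty$) is critical if $\lim_n\delta\iota(q,q)n=1$. *)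

From mathcomp Require Import all_boot.
From Stdlib Require Import Reals ClassicalDescription.
Set Implicit Arguments. Unset Strict Implicit. Unset Printing Implicit Defensive.

Definition irate (q1 q2 : R) : R := Rmult q1 q2.

Definition bern (a : R) (b : bool) : R := if b then a else Rminus R1 a.

(* A sample point of the model with n firms:
   - disc i        : idea i is discovered (prob p)
   - dir (i,j)     : i learns directly from j (prob iota(q,q))
   - ind (i,j)     : auxiliary coin (prob delta); i learns indirectly through j
                     iff dir (i,j) && ind (i,j).
   Only pairs i <> j are used; diagonal coins are dummy independent coins. *)
Definition Omega (n : nat) : finType :=
  ({ffun 'I_n -> bool} * {ffun 'I_n * 'I_n -> bool} * {ffun 'I_n * 'I_n -> bool})%type.

Definition disc {n} (w : Omega n) (i : 'I_n) : bool := w.1.1 i.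
Definition learns_direct {n} (w : Omega n) (i j : 'I_n) : bool :=
  (i != j) && w.1.2 (i, j).
Definition learns_indirect {n} (w : Omega n) (i j : 'I_n) : bool :=
  learns_direct w i j && w.2 (i, j).

Definition ind_edge {n} (w : Omega n) : rel 'I_n :=
  fun j i => learns_indirect w i j.

Definition Iset {n} (w : Omega n) (i : 'I_n) : {set 'I_n} :=
  [set j | disc w j && (j != i) &&
           [exists m, connect (ind_edge w) m i && learns_direct w m j]].

Definition weight (n : nat) (p q delta : R) (w : Omega n) : R :=
  Rmult (Rmult (\big[Rmult/R1]_(i : 'I_n) bern p (w.1.1 i))
               (\big[Rmult/R1]_(ij : 'I_n * 'I_n) bern (irate q q) (w.1.2 ij)))
        (\big[Rmult/R1]_(ij : 'I_n * 'I_n) bern delta (w.2 ij)).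

Definition Prob (n : nat) (p q delta : R) (E : Omega n -> Prop) : R :=
  \big[Rplus/R0]_(w : Omega n)
     (if excluded_middle_informative (E w) then weight p q delta w else R0).

From mathcomp Require Import all_boot.
From Stdlib Require Import Reals.
From HB Require Import structures.
From Stdlib Require Import Lra Lia Psatz ClassicalDescription.
Set Implicit Arguments. Unset Strict Implicit. Unset Printing Implicit Defensive.
Local Open Scope R_scope.

(* Explore the indirect-learning network backwards from firm i: an explored
   firm contributes the ideas it learns directly, and the firms it learns
   indirectly through are explored next.  The ideas met contain I_i, and the
   exploration is dominated by a branching process with offspring mean
   delta q^2 n -> 1.  Everything involved is decreasing in the coins, so by the
   Harris inequality the generating function G = E[x^|J|] satisfies
   G >= (1 - q^2 (1 - x))^n (1 - delta q^2 (1 - G))^n.  At criticality, with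
   1 - x of order u^2, the value 1 - u is a subsolution (the u^2/2 term of
   (1 - delta q^2 u)^n wins), hence E[x^|I_i|] >= 1 - u and
   P[|I_i| > M] <= u / (1 - x^M), which is small once omega(n) >= M. *)

Lemma Rplus_associative : associative Rplus.
Proof. by move=> x y z; rewrite Rplus_assoc. Qed.
Lemma Rmult_associative : associative Rmult.
Proof. by move=> x y z; rewrite Rmult_assoc. Qed.

HB.instance Definition _ :=
  Monoid.isComLaw.Build R R0 Rplus Rplus_associative Rplus_comm Rplus_0_l.
HB.instance Definition _ :=
  Monoid.isComLaw.Build R R1 Rmult Rmult_associative Rmult_comm Rmult_1_l.
HB.instance Definition _ := Monoid.isMulLaw.Build R R0 Rmult Rmult_0_l Rmult_0_r.
HB.instance Definition _ :=
  Monoid.isAddLaw.Build R Rmult Rplus Rmult_plus_distr_r Rmult_plus_distr_l.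

Lemma sumR_le (I : Type) (s : seq I) (P : pred I) (F G : I -> R) :
  (forall i, P i -> F i <= G i) ->
  \big[Rplus/0]_(i <- s | P i) F i <= \big[Rplus/0]_(i <- s | P i) G i.
Proof. by move=> FG; elim/big_ind2: _ => // *; lra. Qed.

Lemma prodR_ge0 (I : Type) (s : seq I) (P : pred I) (F : I -> R) :
  (forall i, P i -> 0 <= F i) -> 0 <= \big[Rmult/1]_(i <- s | P i) F i.
Proof. by move=> F0; elim/big_ind: _ => // *; nra. Qed.

Lemma prodR_le (I : Type) (s : seq I) (P : pred I) (F G : I -> R) :
  (forall i, P i -> 0 <= F i <= G i) ->
  \big[Rmult/1]_(i <- s | P i) F i <= \big[Rmult/1]_(i <- s | P i) G i.
Proof.
move=> FG; suff [] : 0 <= \big[Rmult/1]_(i <- s | P i) F i <=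
                     \big[Rmult/1]_(i <- s | P i) G i by [].
by elim/big_ind2: _ => // *; nra.
Qed.

Lemma prodR_const n (c : R) : \big[Rmult/1]_(j < n) c = c ^ n.
Proof. by rewrite big_const card_ord; elim: n => //= n ->. Qed.

Lemma powR_sum (x : R) (I : Type) (s : seq I) (P : pred I) (c : I -> nat) :
  x ^ (\sum_(i <- s | P i) c i) = \big[Rmult/1]_(i <- s | P i) x ^ c i.
Proof. by rewrite (big_morph (pow x) (pow_add x) (pow_O x)). Qed.

Lemma pow_le1 (x : R) n : 0 <= x <= 1 -> 0 <= x ^ n <= 1.
Proof.
move=> x01; split; first by apply: pow_le; lra.
by rewrite -(pow1 n); apply: pow_incr.
Qed.

Lemma pow_le_decr (x : R) (m n : nat) : 0 <= x <= 1 -> (m <= n)%nat -> x ^ n <= x ^ m.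
Proof.
move=> x01 /subnK <-; rewrite pow_add.
have := pow_le1 (n - m) x01; have := pow_le1 m x01; nra.
Qed.

Section CoinProduct.
Variables (K : finType) (a : K -> R).
Hypothesis a01 : forall k, 0 <= a k <= 1.
Notation coins := {ffun K -> bool}.

Definition coin_weight (w : coins) : R := \big[Rmult/1]_k bern (a k) (w k).
Definition expect (f : coins -> R) : R := \big[Rplus/0]_w (coin_weight w * f w).

Lemma bern_ge0 k b : 0 <= bern (a k) b.
Proof. by have := a01 k; case: b => /=; lra. Qed.

Lemma coin_weight_ge0 w : 0 <= coin_weight w.
Proof. by apply: prodR_ge0 => k _; apply: bern_ge0. Qed.

Lemma coin_weight_sum : \big[Rplus/0]_w coin_weight w = 1.
Proof.
rewrite /coin_weight -(bigA_distr_bigA (fun k b => bern (a k) b)) big1 // => k _.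
rewrite (bigD1 true) //= (bigD1 false) //= big1; last by case.
by rewrite /Rminus; lra.
Qed.

Lemma expect_const c : expect (fun _ => c) = c.
Proof. by rewrite /expect -big_distrl /= coin_weight_sum Rmult_1_l. Qed.

Lemma expectD f g : expect (fun w => f w + g w) = expect f + expect g.
Proof. by rewrite /expect -big_split; apply: eq_bigr => w _ /=; ring. Qed.

Lemma expectZ c f : expect (fun w => c * f w) = c * expect f.
Proof. by rewrite /expect big_distrr; apply: eq_bigr => w _ /=; ring. Qed.

Lemma eq_expect f g : f =1 g -> expect f = expect g.
Proof. by move=> fg; apply: eq_bigr => w _; rewrite fg. Qed.

Lemma le_expect f g : (forall w, f w <= g w) -> expect f <= expect g.
Proof.
by move=> fg; apply: sumR_le => w _; have := coin_weight_ge0 w; have := fg w; nra.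
Qed.

Lemma expect_ge0 f : (forall w, 0 <= f w) -> 0 <= expect f.
Proof. by move=> f0; rewrite -(expect_const 0); apply: le_expect. Qed.

Definition set_coin (w : coins) (k : K) (b : bool) : coins :=
  [ffun j => if j == k then b else w j].

Lemma set_coin_at w k b : set_coin w k b k = b.
Proof. by rewrite ffunE eqxx. Qed.

Lemma set_coin_ne w k b j : j != k -> set_coin w k b j = w j.
Proof. by rewrite ffunE => /negbTE ->. Qed.

Lemma set_coinK w k b b' : set_coin (set_coin w k b) k b' = set_coin w k b'.
Proof. by apply/ffunP => j; rewrite !ffunE; case: eqP. Qed.

Lemma set_coin_id w k : set_coin w k (w k) = w.
Proof. by apply/ffunP => j; rewrite !ffunE; case: eqP => // ->. Qed.

Definition average_coin (k : K) (f : coins -> R) (w : coins) : R :=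
  a k * f (set_coin w k true) + (1 - a k) * f (set_coin w k false).

Lemma coin_weight_split k w :
  coin_weight w = bern (a k) (w k) * \big[Rmult/1]_(j | j != k) bern (a j) (w j).
Proof. by rewrite /coin_weight (bigD1 k). Qed.

Lemma sum_flip_coin k (F : coins -> R) :
  \big[Rplus/0]_w F w =
  \big[Rplus/0]_(w : coins | w k) (F w + F (set_coin w k (~~ w k))).
Proof.
rewrite (bigID (fun w : coins => w k)) /= big_split /=; congr (_ + _).
have flip_inj : injective (fun w => set_coin w k (~~ w k)).
  move=> w1 w2 /= E; have Ek : w1 k = w2 k.
    by move/(congr1 (fun w : coins => w k)): E; rewrite !set_coin_at => /negb_inj.
  by rewrite -(set_coin_id w1 k) -(set_coin_id w2 k) -(set_coinK w1 k (~~ w1 k))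
             -(set_coinK w2 k (~~ w2 k)) E Ek.
rewrite (reindex_inj flip_inj); apply: eq_bigl => w /=.
by rewrite set_coin_at negbK.
Qed.

Lemma expect_average_coin k f : expect (average_coin k f) = expect f.
Proof.
rewrite /expect (sum_flip_coin k (fun w => coin_weight w * average_coin k f w)).
rewrite (sum_flip_coin k (fun w => coin_weight w * f w)); apply: eq_bigr => w wk.
rewrite !(coin_weight_split k) /average_coin !set_coinK set_coin_at /= wk /=.
have -> : set_coin w k true = w by rewrite -[RHS](set_coin_id w k) wk.
have -> : \big[Rmult/1]_(j | j != k) bern (a j) (set_coin w k false j) =
          \big[Rmult/1]_(j | j != k) bern (a j) (w j).
  by apply: eq_bigr => j jk; rewrite set_coin_ne.
set rest := \big[Rmult/1]_(j | j != k) _; ring.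
Qed.

Definition average_coins (l : seq K) (f : coins -> R) : coins -> R :=
  foldr average_coin f l.

Lemma average_coins_free l f (w w' : coins) :
  (forall j, j \notin l -> w j = w' j) -> average_coins l f w = average_coins l f w'.
Proof.
elim: l w w' => [|k l IH] w w' ww' /=; first by congr f; apply/ffunP => j; apply: ww'.
rewrite /average_coin; congr (_ * _ + _ * _); apply: IH => j jl; rewrite !ffunE;
  case: eqP => // /eqP jk; apply: ww'; by rewrite in_cons negb_or jk.
Qed.

Lemma expect_average_all f w0 : expect f = average_coins (index_enum K) f w0.
Proof.
have -> : expect f = expect (average_coins (index_enum K) f).
  by elim: (index_enum K) => //= k l ->; rewrite expect_average_coin.
rewrite /expect (eq_bigr (fun w => coin_weight w * average_coins (index_enum K) f w0)).
  by rewrite -big_distrl /= coin_weight_sum Rmult_1_l.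
by move=> w _; congr (_ * _); apply: average_coins_free => j; rewrite mem_index_enum.
Qed.

Definition coins_le (w w' : coins) := forall k, w k -> w' k.
Definition coin_antitone (f : coins -> R) := forall w w', coins_le w w' -> f w' <= f w.

Lemma coins_le_set w w' k b : coins_le w w' -> coins_le (set_coin w k b) (set_coin w' k b).
Proof. by move=> ww' j; rewrite !ffunE; case: (j == k) => //; apply: ww'. Qed.

Lemma coins_le_set_false_true w k : coins_le (set_coin w k false) (set_coin w k true).
Proof. by move=> j; rewrite !ffunE; case: (j == k). Qed.

Lemma average_coin_antitone k f : coin_antitone f -> coin_antitone (average_coin k f).
Proof.
move=> fdec w w' ww'; rewrite /average_coin; have := a01 k.
have := fdec _ _ (coins_le_set (k := k) (b := true) ww').
have := fdec _ _ (coins_le_set (k := k) (b := false) ww').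
nra.
Qed.

Lemma average_coin_le k f g w :
  (forall w, f w <= g w) -> average_coin k f w <= average_coin k g w.
Proof.
move=> fg; rewrite /average_coin; have := a01 k.
have := fg (set_coin w k true); have := fg (set_coin w k false); nra.
Qed.

(* Chebyshev's sum inequality in a single coin; [harris] follows by
   integrating the coins out one at a time. *)
Lemma average_coin_mul k f g w : coin_antitone f -> coin_antitone g ->
  average_coin k f w * average_coin k g w <= average_coin k (fun w => f w * g w) w.
Proof.
move=> fdec gdec; rewrite /average_coin; have := a01 k.
have := fdec _ _ (@coins_le_set_false_true w k).
have := gdec _ _ (@coins_le_set_false_true w k).
set f1 := f (set_coin w k true); set f0 := f (set_coin w k false).
set g1 := g (set_coin w k true); set g0 := g (set_coin w k false).
move=> g10 f10 a01k.
have : 0 <= a k * (1 - a k) * ((f0 - f1) * (g0 - g1)) by apply: Rmult_le_pos; nra.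
nra.
Qed.

Lemma harris f g : coin_antitone f -> coin_antitone g ->
  expect f * expect g <= expect (fun w => f w * g w).
Proof.
move=> fdec gdec; pose w0 : coins := [ffun => false].
rewrite !(expect_average_all _ w0).
elim: (index_enum K) w0 => [|k l IH] w /=; first lra.
have adec h : coin_antitone h -> coin_antitone (average_coins l h).
  by move=> hdec; elim: l {IH} => //= k' l' IHl; apply: average_coin_antitone.
apply: Rle_trans (@average_coin_mul k _ _ w (adec _ fdec) (adec _ gdec)) _.
exact: average_coin_le.
Qed.

Lemma prod_coin_antitone (I : Type) (s : seq I) (P : pred I) (F : I -> coins -> R) :
  (forall i, coin_antitone (F i)) -> (forall i w, 0 <= F i w) ->
  coin_antitone (fun w => \big[Rmult/1]_(i <- s | P i) F i w).
Proof.
move=> Fdec F0 w w' ww'.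
suff [] : 0 <= \big[Rmult/1]_(i <- s | P i) F i w' <= \big[Rmult/1]_(i <- s | P i) F i w.
  by [].
by elim/big_ind2: _ => [|x1 x2 y1 y2|i Pi]; [lra | nra | have := Fdec i _ _ ww'; have := F0 i w'; lra].
Qed.

Lemma harris_prod (I : Type) (s : seq I) (P : pred I) (F : I -> coins -> R) :
  (forall i, coin_antitone (F i)) -> (forall i w, 0 <= F i w) ->
  \big[Rmult/1]_(i <- s | P i) expect (F i) <=
  expect (fun w => \big[Rmult/1]_(i <- s | P i) F i w).
Proof.
move=> Fdec F0; elim: s => [|i s IH].
  by rewrite big_nil (eq_expect (g := fun _ => 1)) ?expect_const => [|w /=]; rewrite ?big_nil; lra.
rewrite big_cons [X in _ <= X](eq_expect (g := fun w => if P i then F i w * \big[Rmult/1]_(j <- s | P j) F j w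
                     else \big[Rmult/1]_(j <- s | P j) F j w)); last by move=> w /=; rewrite big_cons.
case: (P i) => //.
apply: Rle_trans (harris (Fdec i) (prod_coin_antitone s P Fdec F0)).
by apply: Rmult_le_compat_l => //; apply: expect_ge0.
Qed.

Lemma expect_coin k c1 c0 :
  expect (fun w => if w k then c1 else c0) = a k * c1 + (1 - a k) * c0.
Proof.
rewrite -(expect_average_coin k) /average_coin.
by rewrite (eq_expect (g := fun _ => a k * c1 + (1 - a k) * c0)) ?expect_const // => w;
  rewrite !set_coin_at.
Qed.

Definition coin_free (k : K) (h : coins -> R) := forall w b, h (set_coin w k b) = h w.

Lemma expect_indep k h : coin_free k h ->
  expect (fun w => (if w k then 1 else 0) * h w) = a k * expect h.
Proof.
move=> hk; rewrite -(expect_average_coin k) -expectZ; apply: eq_expect => w.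
by rewrite /average_coin !set_coin_at !hk; ring.
Qed.

Lemma expect_indep2 k1 k2 h : k1 != k2 -> coin_free k1 h -> coin_free k2 h ->
  expect (fun w => (if w k1 && w k2 then 1 else 0) * h w) = a k1 * a k2 * expect h.
Proof.
move=> k12 hk1 hk2.
rewrite (eq_expect (g := fun w => (if w k1 then 1 else 0) * ((if w k2 then 1 else 0) * h w))).
  rewrite expect_indep ?expect_indep ?Rmult_assoc // => w b.
  by rewrite hk1 set_coin_ne // eq_sym.
by move=> w; case: (w k1); case: (w k2) => /=; ring.
Qed.

End CoinProduct.

Section Model.
Variables (N : nat) (p q delta : R).
Notation firm := 'I_N.

Definition coin_index : finType := (('I_N + ('I_N * 'I_N)) + ('I_N * 'I_N))%type.
Notation coins := {ffun coin_index -> bool}.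

Definition coin_prob (k : coin_index) : R :=
  match k with inl (inl _) => p | inl (inr _) => irate q q | inr _ => delta end.

Definition config (w : coins) : Omega N :=
  ([ffun i => w (inl (inl i))], [ffun ij => w (inl (inr ij))], [ffun ij => w (inr ij)]).

Definition coins_of_config (o : Omega N) : coins :=
  [ffun k : coin_index => match k with
     | inl (inl i) => o.1.1 i | inl (inr ij) => o.1.2 ij | inr ij => o.2 ij end].

Lemma configK : cancel config coins_of_config.
Proof. by move=> w; apply/ffunP => -[[i|ij]|ij]; rewrite !ffunE. Qed.

Lemma coins_of_configK : cancel coins_of_config config.
Proof. by move=> [[f1 f2] f3]; congr (_, _, _); apply/ffunP => x; rewrite !ffunE. Qed.

Lemma weight_config w : weight p q delta (config w) = coin_weight coin_prob w.
Proof.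
rewrite /weight /coin_weight big_sumType big_sumType /=.
by congr (_ * _ * _); apply: eq_bigr => x _; rewrite ffunE.
Qed.

Lemma Prob_expect (E : Omega N -> Prop) : Prob p q delta E =
  expect coin_prob (fun w => if excluded_middle_informative (E (config w)) then 1 else 0).
Proof.
rewrite /Prob /expect (reindex config) /=; last first.
  by exists coins_of_config => x _; [apply: configK | apply: coins_of_configK].
apply: eq_bigr => w _; rewrite weight_config.
by case: excluded_middle_informative => _ /=; ring.
Qed.

Definition direct (w : coins) (i j : firm) : bool := (i != j) && w (inl (inr (i, j))).
Definition indirect (w : coins) (i j : firm) : bool := direct w i j && w (inr (i, j)).

Lemma learns_direct_config w i j : learns_direct (config w) i j = direct w i j.
Proof. by rewrite /learns_direct /direct /config /= ffunE. Qed.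

Lemma learns_indirect_config w i j : learns_indirect (config w) i j = indirect w i j.
Proof. by rewrite /learns_indirect /indirect learns_direct_config /config /= ffunE. Qed.

(* The current firm is removed from [U] before recursing, so the
   coins used at the root are independent of the deeper explorations. *)
Fixpoint explore (w : coins) (k : nat) (U : {set firm}) (v : firm) : {set firm} :=
  if k is k'.+1 then v |: \bigcup_(m in U :\ v | indirect w v m) explore w k' (U :\ v) m
  else [set v].

Definition explored_ideas (w : coins) k U v : {set firm} :=
  [set j | [exists m in explore w k U v, direct w m j]].

Definition direct_ideas (w : coins) v : {set firm} := [set j | direct w v j].

Lemma explore_root (w : coins) k (U : {set firm}) v : v \in explore w k U v.
Proof. by case: k => [|k] /=; rewrite ?set11 ?setU11. Qed.

Lemma explore_sub (w : coins) k (U : {set firm}) v : v \in U -> explore w k U v \subset U.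
Proof.
elim: k U v => [|k IH] U v vU /=; first by rewrite sub1set.
apply/subsetP => x /setU1P [->|/bigcupP [m /andP [mU _] xm]] //.
by have := subsetP (IH _ _ mU) x xm; rewrite inE => /andP [].
Qed.

Lemma explore_path w (x : firm) (s : seq firm) (U : {set firm}) k :
  uniq (x :: s) -> path (ind_edge (config w)) x s -> {subset x :: s <= U} ->
  (size s <= k)%nat -> x \in explore w k U (last x s).
Proof.
elim/last_ind: s U k => [|s y IH] U k; first by rewrite /= explore_root.
rewrite -rcons_cons rcons_uniq rcons_path last_rcons size_rcons.
move=> /andP[yxs uxs] /andP[pxs e] sub; case: k => [|k] //= sk.
apply/setU1P; right; apply/bigcupP; exists (last x s).
  move: e; rewrite !inE /ind_edge learns_indirect_config => -> ; rewrite andbT.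
  apply/andP; split.
    by apply/eqP => E; move: yxs; rewrite -E mem_last.
  by apply: sub; rewrite mem_rcons in_cons mem_last orbT.
apply: IH => // z zxs; rewrite !inE; apply/andP; split.
  by apply/eqP => E; move: yxs; rewrite -E zxs.
by apply: sub; rewrite mem_rcons in_cons zxs orbT.
Qed.

Lemma connect_explore w m i : connect (ind_edge (config w)) m i -> m \in explore w N setT i.
Proof.
move=> /connectP [s ps ->]; have [s' ps' us' _] := shortenP ps.
have := max_card (mem (m :: s')); rewrite (card_uniqP us') card_ord /= => ms'.
by apply: explore_path => // [z _|]; rewrite ?inE // ltnW.
Qed.

Lemma Iset_sub_explored w i : Iset (config w) i \subset explored_ideas w N setT i.
Proof.
apply/subsetP => j; rewrite !inE => /andP[_ /existsP [m /andP[cm dm]]].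
by apply/existsP; exists m; rewrite connect_explore -?learns_direct_config.
Qed.

Lemma direct_mono (w w' : coins) i j : coins_le w w' -> direct w i j -> direct w' i j.
Proof. by rewrite /direct => ww' /andP[-> /ww']. Qed.

Lemma indirect_mono (w w' : coins) i j : coins_le w w' -> indirect w i j -> indirect w' i j.
Proof. by rewrite /indirect => ww' /andP[/(direct_mono ww') -> /ww']. Qed.

Lemma explore_mono (w w' : coins) k (U : {set firm}) v : coins_le w w' -> explore w k U v \subset explore w' k U v.
Proof.
move=> ww'; elim: k U v => [|k IH] U v //=.
apply/subsetP => x /setU1P [->|/bigcupP [m /andP [mU im] xm]]; first exact: setU11.
apply/setU1P; right; apply/bigcupP; exists m; first by rewrite mU (indirect_mono ww').
exact: (subsetP (IH _ _)).
Qed.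

Lemma explored_ideas_mono (w w' : coins) k (U : {set firm}) v :
  coins_le w w' -> explored_ideas w k U v \subset explored_ideas w' k U v.
Proof.
move=> ww'; apply/subsetP => j; rewrite !inE => /existsP [m /andP [mR dm]].
by apply/existsP; exists m; rewrite (subsetP (explore_mono k U v ww')) // (direct_mono ww').
Qed.

Definition agree_on (U : {set firm}) (w w' : coins) := forall x y, x \in U ->
  w (inl (inr (x, y))) = w' (inl (inr (x, y))) /\ w (inr (x, y)) = w' (inr (x, y)).

Lemma agree_on_sub (U U' : {set firm}) (w w' : coins) :
  U' \subset U -> agree_on U w w' -> agree_on U' w w'.
Proof. by move=> sU ww' x y xU; apply: ww'; apply: (subsetP sU). Qed.

Lemma agree_on_direct U (w w' : coins) x y : agree_on U w w' -> x \in U -> direct w x y = direct w' x y.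
Proof. by move=> ww' xU; rewrite /direct (ww' x y xU).1. Qed.

Lemma agree_on_indirect U (w w' : coins) x y :
  agree_on U w w' -> x \in U -> indirect w x y = indirect w' x y.
Proof. by move=> ww' xU; rewrite /indirect (agree_on_direct y ww' xU) (ww' x y xU).2. Qed.

Lemma explore_agree (w w' : coins) k (U : {set firm}) v :
  v \in U -> agree_on U w w' -> explore w k U v = explore w' k U v.
Proof.
elim: k U v => [|k IH] U v vU ww' //=.
congr (_ |: _); apply: eq_big => [m|m]; first by rewrite (agree_on_indirect m ww' vU).
rewrite andbC => /andP [_ mU]; apply: IH => //.
by apply: agree_on_sub ww'; apply: subD1set.
Qed.

Lemma explored_ideas_agree (w w' : coins) k (U : {set firm}) v :
  v \in U -> agree_on U w w' -> explored_ideas w k U v = explored_ideas w' k U v.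
Proof.
move=> vU ww'; apply/setP => j; rewrite !inE (explore_agree k vU ww').
apply: eq_existsb => m; case mR: (m \in explore w' k U v) => //=.
by apply: agree_on_direct ww' _; apply: (subsetP (explore_sub w' k vU)).
Qed.

Lemma explored_ideas0 (w : coins) (U : {set firm}) v : explored_ideas w 0 U v = direct_ideas w v.
Proof.
apply/setP => j; rewrite !inE /=.
by apply/existsP/idP => [[m /andP [/set1P -> //]]|dvj]; exists v; rewrite set11.
Qed.

Lemma explored_ideasS (w : coins) k (U : {set firm}) v : explored_ideas w k.+1 U v \subset
  direct_ideas w v :|: \bigcup_(m in U :\ v | indirect w v m) explored_ideas w k (U :\ v) m.
Proof.
apply/subsetP => j; rewrite !inE.
case/existsP => m' /andP [/setU1P [->|/bigcupP [m mP m'R]] dm]; first by rewrite dm.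
by apply/orP; right; apply/bigcupP; exists m => //; rewrite inE; apply/existsP; exists m'; rewrite m'R.
Qed.

End Model.

Section CoinProbabilities.
Variables (N : nat) (p q delta : R).
Hypotheses (p01 : 0 <= p <= 1) (q01 : 0 <= q <= 1) (delta01 : 0 <= delta <= 1).

Lemma irate01 : 0 <= irate q q <= 1.
Proof. by rewrite /irate; nra. Qed.

Lemma coin_prob01 k : 0 <= @coin_prob N p q delta k <= 1.
Proof. by have := irate01; case: k => [[i|ij]|ij] /=; lra. Qed.

Lemma Prob_ge0 (E : Omega N -> Prop) : 0 <= Prob p q delta E.
Proof.
rewrite Prob_expect; apply: expect_ge0 => [|w]; first exact: coin_prob01.
by case: excluded_middle_informative => _ /=; lra.
Qed.

End CoinProbabilities.

Section GeneratingFunction.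
Variables (N : nat) (p q delta x psi : R).
Hypotheses (p01 : 0 <= p <= 1) (q01 : 0 <= q <= 1) (delta01 : 0 <= delta <= 1).
Hypotheses (x01 : 0 <= x <= 1) (psi01 : 0 <= psi <= 1).
Notation firm := 'I_N.
Notation a := (@coin_prob N p q delta).
Notation coins := {ffun coin_index N -> bool}.

Let a01 := @coin_prob01 N p q delta p01 q01 delta01.
Let s01 := @irate01 q q01.

(* For [G k = E x^|J_k|] the exploration gives
   [G (k+1) >= (1 - q^2 (1 - x))^N * (1 - q^2 delta (1 - G k))^N], so every
   [psi] below both the start and the step of this recursion bounds all [G k]. *)
Hypothesis psi_le_direct : psi <= (1 - irate q q * (1 - x)) ^ N.
Hypothesis psi_subsolution :
  psi <= (1 - irate q q * (1 - x)) ^ N * (1 - irate q q * delta * (1 - psi)) ^ N.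

Lemma pow_direct_ideas_antitone v : coin_antitone (fun w : coins => x ^ #|direct_ideas w v|).
Proof.
move=> w w' ww'; apply: pow_le_decr => //; apply: subset_leq_card.
by apply/subsetP => j; rewrite !inE; apply: direct_mono.
Qed.

Lemma pow_explored_ideas_antitone k (U : {set firm}) v :
  coin_antitone (fun w : coins => x ^ #|explored_ideas w k U v|).
Proof.
move=> w w' ww'; apply: pow_le_decr => //.
by apply: subset_leq_card; apply: explored_ideas_mono.
Qed.

Lemma expect_pow_direct_ideas v :
  (1 - irate q q * (1 - x)) ^ N <= expect a (fun w => x ^ #|direct_ideas w v|).
Proof.
rewrite (eq_expect a (g := fun w => \big[Rmult/1]_(j : firm) (if direct w v j then x else 1))).
  2: move=> w; rewrite -sum1_card powR_sum big_mkcond.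
  2: by apply: eq_bigr => j _; rewrite inE; case: direct => /=; ring.
apply: Rle_trans (harris_prod a01 _ _ _ _); last first.
- by move=> j w; case: direct; lra.
- move=> j w w' ww'; case E : (direct w v j); case E' : (direct w' v j); try lra.
  by move: (direct_mono ww' E); rewrite E'.
rewrite -prodR_const; apply: prodR_le => j _; have := s01; split; first nra.
have [<-|vj] := eqVneq v j.
  rewrite (eq_expect a (g := fun _ => 1)) ?expect_const; first nra.
  by move=> w; rewrite /direct eqxx.
rewrite (eq_expect a (g := fun w => if w (inl (inr (v, j))) then x else 1)) => [|w]; last first.
  by rewrite /direct vj.
by rewrite expect_coin /=; lra.
Qed.

Lemma explored_ideas_coin_free k (U : {set firm}) m v0 m0 (c : coin_index N) : m \in U -> v0 \notin U ->
  c = inl (inr (v0, m0)) \/ c = inr (v0, m0) ->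
  coin_free c (fun w : coins => 1 + -1 * x ^ #|explored_ideas w k U m|).
Proof.
move=> mU v0U hc w b; rewrite (explored_ideas_agree (w' := w) k mU) // => x' y x'U.
have x'v0 : x' != v0 by apply: contraNneq v0U => <-.
by case: hc => ->; rewrite !set_coin_ne //; apply: contraNneq x'v0 => -[->].
Qed.

Definition branch (k : nat) (U : {set firm}) (v m : firm) (w : coins) : R :=
  if indirect w v m then x ^ #|explored_ideas w k (U :\ v) m| else 1.

Lemma branch01 k (U : {set firm}) v m w : 0 <= branch k U v m w <= 1.
Proof. by rewrite /branch; case: indirect; [apply: pow_le1 | lra]. Qed.

Lemma branch_antitone k (U : {set firm}) v m : coin_antitone (branch k U v m).
Proof.
move=> w w' ww'; rewrite /branch.
case E : (indirect w v m); case E' : (indirect w' v m).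
- exact: pow_explored_ideas_antitone.
- by move: (indirect_mono ww' E); rewrite E'.
- by have := pow_le1 #|explored_ideas w' k (U :\ v) m| x01; lra.
- lra.
Qed.

Lemma expect_branch k (U : {set firm}) v m : m \in U :\ v ->
  expect a (branch k U v m) =
  1 - irate q q * delta * (1 - expect a (fun w => x ^ #|explored_ideas w k (U :\ v) m|)).
Proof.
move=> mU; have vm : v != m by move: mU; rewrite !inE eq_sym => /andP[].
have vU : v \notin U :\ v by rewrite !inE eqxx.
rewrite (eq_expect a (g := fun w => 1 + -1 * ((if w (inl (inr (v, m))) && w (inr (v, m))
             then 1 else 0) * (1 + -1 * x ^ #|explored_ideas w k (U :\ v) m|)))); last first.
  move=> w; rewrite /branch /indirect /direct vm /=; set t := x ^ _.
  by case: (w (inl (inr (v, m)))); case: (w (inr (v, m))) => /=; ring.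
rewrite expectD expect_const expectZ expect_indep2 //; last first.
- exact: (explored_ideas_coin_free (m0 := m) k mU vU (or_intror erefl)).
- exact: (explored_ideas_coin_free (m0 := m) k mU vU (or_introl erefl)).
by rewrite expectD expect_const expectZ /=; ring.
Qed.

Lemma pow_explored_ideasS_ge k (U : {set firm}) v (w : coins) :
  x ^ #|direct_ideas w v| * \big[Rmult/1]_(m in U :\ v) branch k U v m w <=
  x ^ #|explored_ideas w k.+1 U v|.
Proof.
have card_le : (#|explored_ideas w k.+1 U v| <= #|direct_ideas w v| +
    \sum_(m in U :\ v | indirect w v m) #|explored_ideas w k (U :\ v) m|)%nat.
  apply: leq_trans (subset_leq_card (explored_ideasS w k U v)) _.
  apply: leq_trans (leq_card_setU _ _).1 _; rewrite leq_add2l.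
  elim/big_ind2: _ => [|n A m B nA mB|//]; first by rewrite cards0.
  by apply: leq_trans (leq_card_setU A B).1 _; apply: leq_add.
by move: card_le => /(pow_le_decr x01); rewrite pow_add powR_sum big_mkcondr.
Qed.

Lemma expect_pow_explored_ideasS_ge k (U : {set firm}) v :
  expect a (fun w => x ^ #|direct_ideas w v|) *
  \big[Rmult/1]_(m in U :\ v) expect a (branch k U v m) <=
  expect a (fun w => x ^ #|explored_ideas w k.+1 U v|).
Proof.
apply: Rle_trans (le_expect a01 (pow_explored_ideasS_ge k U v)).
have branch0 m w := proj1 (branch01 k U v m w).
apply: Rle_trans (harris a01 (pow_direct_ideas_antitone v)
  (prod_coin_antitone _ _ (@branch_antitone k U v) branch0)).
apply: Rmult_le_compat_l; first by apply: (expect_ge0 a01) => w; apply: pow_le; lra.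
exact: (harris_prod a01 _ (fun m => m \in U :\ v) (@branch_antitone k U v) branch0).
Qed.

Lemma prod_expect_branch_ge k (U : {set firm}) v :
  (forall m, m \in U :\ v ->
     psi <= expect a (fun w => x ^ #|explored_ideas w k (U :\ v) m|)) ->
  (1 - irate q q * delta * (1 - psi)) ^ N <=
  \big[Rmult/1]_(m in U :\ v) expect a (branch k U v m).
Proof.
move=> IH; have sd01 : 0 <= irate q q * delta <= 1 by have := s01; split; nra.
rewrite -prodR_const [X in _ <= X]big_mkcond; apply: prodR_le => m _.
have r01 : 0 <= irate q q * delta * (1 - psi) <= 1 by split; nra.
case: ifP => mU; last by lra.
rewrite expect_branch //; split; first lra.
by apply/Rplus_le_compat_l/Ropp_le_contravar/Rmult_le_compat_l; [lra | have := IH m mU; lra].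
Qed.

Lemma expect_pow_explored_ideas_ge k (U : {set firm}) v : v \in U ->
  psi <= expect a (fun w => x ^ #|explored_ideas w k U v|).
Proof.
elim: k U v => [|k IH] U v vU.
  have := expect_pow_direct_ideas v.
  by rewrite (eq_expect a (g := fun w => x ^ #|explored_ideas w 0 U v|)) => [|w];
    rewrite ?explored_ideas0; lra.
apply: Rle_trans (expect_pow_explored_ideasS_ge k U v).
apply: Rle_trans psi_subsolution _.
have sd01 : 0 <= irate q q * delta <= 1 by have := s01; split; nra.
apply: Rmult_le_compat.
- by apply: pow_le; have := s01; nra.
- by apply: pow_le; nra.
- exact: expect_pow_direct_ideas.
- by apply: prod_expect_branch_ge => m mU; apply: IH.
Qed.

Lemma Prob_large_Iset_le (M : nat) (i : firm) (om : R) : INR M <= om ->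
  (1 - x ^ M) * Prob p q delta (fun w : Omega N => om < INR #|Iset w i|) <= 1 - psi.
Proof.
move=> Mom; have G : psi <= expect a (fun w => x ^ #|explored_ideas w N setT i|).
  exact: expect_pow_explored_ideas_ge (in_setT i).
have M01 := pow_le1 M x01.
have markov : expect a (fun w : coins => (1 - x ^ M) *
      (if excluded_middle_informative (om < INR #|Iset (config w) i|) then 1 else 0)) <=
    expect a (fun w => 1 + -1 * x ^ #|explored_ideas w N setT i|).
  apply: (le_expect a01) => w.
  case: excluded_middle_informative => large /=.
  - have : (M <= #|explored_ideas w N setT i|)%nat.
      apply: leq_trans (subset_leq_card (Iset_sub_explored w i)).
      by apply/leP/INR_le; lra.
    move: #|_| => J /(pow_le_decr x01); have := pow_le1 J x01; lra.
  - by move: #|_| => J; have := pow_le1 J x01; lra.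
by move: markov; rewrite Prob_expect expectZ expectD expect_const expectZ; lra.
Qed.

End GeneratingFunction.

Lemma bernoulli_ineq n (y : R) : 0 <= y <= 1 -> 1 - INR n * y <= (1 - y) ^ n.
Proof.
move=> y01; elim: n => [|n IH]; first by rewrite /=; lra.
by rewrite [(1 - y) ^ n.+1]/= S_INR; have := pos_INR n; nra.
Qed.

Lemma falling3_ge0 n : 0 <= INR n * (INR n - 1) * (INR n - 2).
Proof. by case: n => [|[|n]]; rewrite ?S_INR /=; [lra | lra | have := pos_INR n; nra]. Qed.

Lemma falling3_le_cube n : INR n * (INR n - 1) * (INR n - 2) <= INR n ^ 3.
Proof. by case: n => [|[|n]]; rewrite ?S_INR /=; [lra | lra | have := pos_INR n; nra]. Qed.

Lemma bonferroni3 n (y : R) : 0 <= y <= 1 ->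
  1 - INR n * y + INR n * (INR n - 1) / 2 * y ^ 2
    - INR n * (INR n - 1) * (INR n - 2) / 6 * y ^ 3 <= (1 - y) ^ n.
Proof.
move=> y01; elim: n => [|n IH]; first by rewrite /=; lra.
rewrite [(1 - y) ^ n.+1]/= S_INR.
have y4 : 0 <= INR n * (INR n - 1) * (INR n - 2) / 6 * y ^ 4.
  by apply: Rmult_le_pos; [have := falling3_ge0 n; lra | apply: pow_le; lra].
have : (1 - y) * (1 - INR n * y + INR n * (INR n - 1) / 2 * y ^ 2
    - INR n * (INR n - 1) * (INR n - 2) / 6 * y ^ 3) <= (1 - y) * (1 - y) ^ n.
  by apply: Rmult_le_compat_l; lra.
have -> : (1 - y) * (1 - INR n * y + INR n * (INR n - 1) / 2 * y ^ 2
    - INR n * (INR n - 1) * (INR n - 2) / 6 * y ^ 3) =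
  1 - (INR n + 1) * y + (INR n + 1) * (INR n + 1 - 1) / 2 * y ^ 2 -
  (INR n + 1) * (INR n + 1 - 1) * (INR n + 1 - 2) / 6 * y ^ 3
  + INR n * (INR n - 1) * (INR n - 2) / 6 * y ^ 4 by field.
lra.
Qed.

(* With mean offspring [A] close to 1, the second-order gain [u^2/2] of the
   Bonferroni bound beats the loss [A u^2 / 64] caused by taking [x < 1]. *)
Lemma critical_margin (A r u : R) : 0 < u <= 1/4 -> Rabs (A - 1) <= u / 16 ->
  0 <= r <= u / 16 ->
  1 - u <= 1 - A * u + (A * A - A * r) / 2 * u ^ 2 - A ^ 3 / 6 * u ^ 3 - A * u ^ 2 / 64.
Proof.
move=> u01 A1 r0.
have [t -> t_small] : exists2 t, A = 1 + t & - u / 16 <= t <= u / 16.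
  by exists (A - 1); [ring | move: A1; split_Rabs; lra].
have t_tiny : -1/64 <= t <= 1/64 by lra.
have quad : ((1 + t) * (1 + t) - (1 + t) * r) / 2 >= 0.45 by nra.
have cube : (1 + t) ^ 3 <= 1.1.
  have -> : (1 + t) ^ 3 = (1 + t) * (1 + t) * (1 + t) by ring.
  nra.
set B := ((1 + t) * (1 + t) - (1 + t) * r) / 2 - (1 + t) ^ 3 / 6 * u - (1 + t) / 64.
have B_ge : B >= 0.38 by rewrite /B; nra.
have -> : 1 - (1 + t) * u + ((1 + t) * (1 + t) - (1 + t) * r) / 2 * u ^ 2 -
   (1 + t) ^ 3 / 6 * u ^ 3 - (1 + t) * u ^ 2 / 64 = 1 - u - t * u + B * u * u.
  by rewrite /B; field.
have : t * u <= u / 16 * u by apply: Rmult_le_compat_r; lra.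
nra.
Qed.

Section CriticalSubsolution.
Variables (N : nat) (q delta u : R).
Hypotheses (q01 : 0 <= q <= 1) (delta01 : 0 < delta <= 1) (u01 : 0 < u <= 1/4).
Hypothesis mean_near1 : Rabs (delta * irate q q * INR N - 1) <= u / 16.
Hypothesis rate_small : delta * irate q q <= u / 16.

Let A := delta * irate q q * INR N.

Lemma A_bounds : 1 - u / 16 <= A <= 1 + u / 16.
Proof. by move: mean_near1; rewrite /A; split_Rabs; lra. Qed.

Lemma direct_factor_ge :
  1 - A * u ^ 2 / 64 <= (1 - irate q q * (1 - (1 - delta * u ^ 2 / 64))) ^ N.
Proof.
have s01 := irate01 q01.
have u2 : 0 <= u ^ 2 <= 1 by rewrite /=; split; nra.
have e01 : 0 <= delta * u ^ 2 / 64 <= 1 by split; nra.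
have y01 : 0 <= irate q q * (delta * u ^ 2 / 64) <= 1 by split; nra.
have -> : 1 - (1 - delta * u ^ 2 / 64) = delta * u ^ 2 / 64 by ring.
apply: Rle_trans (bernoulli_ineq N y01); rewrite /A; right; field.
Qed.

Lemma indirect_factor_ge :
  1 - A * u + (A * A - A * (delta * irate q q)) / 2 * u ^ 2 - A ^ 3 / 6 * u ^ 3 <=
  (1 - irate q q * delta * (1 - (1 - u))) ^ N.
Proof.
have s01 := irate01 q01.
set r := irate q q * delta.
have r01 : 0 <= r <= u / 16 by rewrite /r; split; nra.
have ru01 : 0 <= r * (1 - (1 - u)) <= 1 by split; nra.
have Nr : INR N * r = A by rewrite /A /r; ring.
apply: Rle_trans (bonferroni3 N ru01).
have ru3 : 0 <= (r * u) ^ 3 by apply: pow_le; nra.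
have : INR N * (INR N - 1) * (INR N - 2) / 6 * (r * u) ^ 3 <= INR N ^ 3 / 6 * (r * u) ^ 3.
  by apply: Rmult_le_compat_r => //; have := falling3_le_cube N; lra.
have -> : 1 - (1 - u) = u by ring.
have -> : delta * irate q q = r by rewrite /r; ring.
have -> : INR N * (r * u) = A * u by rewrite -Nr; ring.
have -> : INR N * (INR N - 1) / 2 * (r * u) ^ 2 = (A * A - A * r) / 2 * u ^ 2.
  by rewrite -Nr; field.
have -> : INR N ^ 3 / 6 * (r * u) ^ 3 = A ^ 3 / 6 * u ^ 3 by rewrite -Nr; field.
lra.
Qed.

Lemma critical_subsolution :
  1 - u <= (1 - irate q q * (1 - (1 - delta * u ^ 2 / 64))) ^ N /\
  1 - u <= (1 - irate q q * (1 - (1 - delta * u ^ 2 / 64))) ^ N *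
           (1 - irate q q * delta * (1 - (1 - u))) ^ N.
Proof.
have [A_ge A_le] := A_bounds.
have Au2 : 0 <= A * u ^ 2 / 64 <= u by rewrite /=; split; nra.
have D := direct_factor_ge.
split; first lra.
set P := (1 - irate q q * delta * (1 - (1 - u))) ^ N.
have P01 : 0 <= P <= 1.
  have s01 := irate01 q01.
  have sd01 : 0 <= irate q q * delta <= 1 by split; nra.
  by apply: pow_le1; split; nra.
have margin := @critical_margin A (delta * irate q q) u u01 mean_near1
  ltac:(split; [rewrite /irate; nra | exact: rate_small]).
have := indirect_factor_ge; rewrite -/P => I.
have : (1 - A * u ^ 2 / 64) * P <= (1 - irate q q * (1 - (1 - delta * u ^ 2 / 64))) ^ N * P.
  by apply: Rmult_le_compat_r; lra.
have : P - A * u ^ 2 / 64 <= (1 - A * u ^ 2 / 64) * P by nra.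
lra.
Qed.

End CriticalSubsolution.

Lemma Prob_large_Iset_critical N p q delta u M (i : 'I_N) (om : R) :
  0 <= p <= 1 -> 0 <= q <= 1 -> 0 < delta <= 1 -> 0 < u <= 1/4 ->
  Rabs (delta * irate q q * INR N - 1) <= u / 16 -> delta * irate q q <= u / 16 ->
  (1 - delta * u ^ 2 / 64) ^ M <= 1/2 -> INR M <= om ->
  Prob p q delta (fun w : Omega N => om < INR #|Iset w i|) <= 2 * u.
Proof.
move=> p01 q01 delta01 u01 mean_near1 rate_small xM Mom.
have [D S] := critical_subsolution q01 delta01 u01 mean_near1 rate_small.
have x01 : 0 <= 1 - delta * u ^ 2 / 64 <= 1 by rewrite /=; split; nra.
have := Prob_large_Iset_le p01 q01 (ltac:(lra) : 0 <= delta <= 1) x01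
  (ltac:(lra) : 0 <= 1 - u <= 1) D S i Mom.
have := Prob_ge0 p01 q01 (ltac:(lra) : 0 <= delta <= 1)
  (fun w : Omega N => om < INR #|Iset w i|).
nra.
Qed.

Lemma critical_eventually (delta : R) (q : nat -> R) (c : R) : 0 < c <= 1 ->
  Un_cv (fun n => delta * irate (q n) (q n) * INR n) 1 ->
  exists N0, forall n, (N0 <= n)%nat ->
    Rabs (delta * irate (q n) (q n) * INR n - 1) <= c /\ delta * irate (q n) (q n) <= c.
Proof.
move=> c01 crit; have [N1 HN1] := crit c ltac:(lra).
have [N2 [N2_small N2_pos]] := archimed_cor1 (c / 2) ltac:(lra).
exists (N1 + N2)%coq_nat => n /leP n_ge.
have := HN1 n ltac:(lia); rewrite /R_dist => mean.
split; first lra.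
have N2_n : / INR n <= / INR N2 by apply: Rinv_le_contravar; [apply: lt_0_INR | apply: le_INR]; lia.
have n_pos : 0 < / INR n by apply/Rinv_0_lt_compat/lt_0_INR; lia.
have -> : delta * irate (q n) (q n) = delta * irate (q n) (q n) * INR n * / INR n.
  by field; apply: not_0_INR; lia.
move: mean; set A := delta * irate (q n) (q n) * INR n => mean.
have : A <= 2 by move: mean; split_Rabs; lra.
nra.
Qed.

Local Close Scope R_scope.

Theorem mainTheorem14 (delta : R) (p q : nat -> R) (omega : nat -> R)
  (fi : forall n : nat, 'I_(n.+2)) :
  (0 < delta <= 1)%R ->
  (forall n : nat, (2 <= n)%N -> (0 < p n < 1)%R /\ (0 <= q n <= 1)%R) ->
  Un_cv (fun n : nat => (delta * irate (q n) (q n) * INR n)%R) 1%R ->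
  cv_infty omega ->
  Un_cv (fun n : nat =>
           Prob (p n.+2) (q n.+2) delta
                (fun w : Omega n.+2 => (omega n.+2 < INR #|Iset w (fi n)|)%R))
        0%R.
Proof.
Local Open Scope R_scope.
move=> delta01 pq crit omega_infty eps eps0.
pose u := Rmin (eps / 4) (1 / 4).
have u01 : 0 < u <= 1 / 4 by split; [apply: Rmin_glb_lt; lra | apply: Rmin_r].
have u_eps : u <= eps / 4 by apply: Rmin_l.
have [M xM] : exists M, (1 - delta * u ^ 2 / 64) ^ M <= 1 / 2.
  have u2 : 0 < u ^ 2 <= 1 by rewrite /=; split; nra.
  have x01 : 0 <= 1 - delta * u ^ 2 / 64 < 1 by split; nra.
  have [M HM] := pow_lt_1_zero (1 - delta * u ^ 2 / 64)
    ltac:(rewrite Rabs_right; lra) (1 / 2) ltac:(lra).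
  by exists M; have := HM M (le_n M); rewrite Rabs_right; [lra | apply/Rle_ge/pow_le; lra].
have [N0 HN0] := critical_eventually (ltac:(lra) : 0 < u / 16 <= 1) crit.
have [N1 HN1] := omega_infty (INR M).
exists (N0 + N1)%coq_nat => n n_ge.
have [p01 q01] := pq n.+2 erefl.
have [mean_near1 rate_small] := HN0 n.+2 ltac:(apply/leP; lia).
have := Prob_large_Iset_critical (fi n) (ltac:(lra) : 0 <= p n.+2 <= 1) q01 delta01 u01
  mean_near1 rate_small xM (Rlt_le _ _ (HN1 n.+2 ltac:(lia))).
have := Prob_ge0 (ltac:(lra) : 0 <= p n.+2 <= 1) q01 (ltac:(lra) : 0 <= delta <= 1)
  (fun w : Omega n.+2 => omega n.+2 < INR #|Iset w (fi n)|).
by rewrite /R_dist Rminus_0_r => P0; rewrite Rabs_right; lra.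
Qed.
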